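(* Let $n\ge2$, $1<p<\infty$, $R>0$, $\bar\beta>0$ a constant, and let $f$ be as in the context. Then there exists a positive constant $C=C(R)$ such that $f(r)\le C(R)\,r$ for all $0\le r\le R$.
   Context: $F:\mathbb R^n\to[0,\infty)$ is convex, even, positively 1-homogeneous, with $a|\xi|\le F(\xi)\le b|\xi|$ ($0<a\le b$), $F\in C^2(\mathbb R^n\setminus\{0\})$, Hessian of $F^p$ positive definite off the origin; $F^o(v)=\sup_{\xi\ne0}\langle\xi,v\rangle/F(\xi)$ and $\mathcal W_R=\{x:F^o(x)<R\}$. $\ell_1(\bar\beta,\mathcal W_R)=\inf_{v\in W^{1,p}(\mathcal W_R),v\not\equiv0}\frac{\int_{\mathcal W_R}F^p(\nabla v)dx+\bar\beta\int_{\partial\mathcal W_R}|v|^pF(\nu)d\mathcal H^{n-1}}{\int_{\mathcal W_R}|v|^pdx}$ ($\nu$ the Euclidean outer normal). It is known that the positive first eigenfunction on $\mathcal W_R$ has the form $v(x)=\rho(F^o(x))$, where $\rho\in C^\infty(]0,R[)\cap C^1([0,R])$ is positive, decreasing, and solves $-(p-1)(-\rho'(r))^{p-2}\rho''(r)+\frac{n-1}{r}(-\rho'(r))^{p-1}=\ell_1(\bar\beta,\mathcal W_R)\rho(r)^{p-1}$ for $r\in]0,R[$, $\rho'(0)=0$, $-(-\rho'(R))^{p-1}+\bar\beta\rho(R)^{p-1}=0$. Define $f(r)=\dfrac{(-\rho'(r))^{p-1}}{\rho(r)^{p-1}}$ for $r\in[0,R]$. *)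

From mathcomp Require Import all_boot all_order all_algebra.
From mathcomp Require Import all_classical all_reals all_analysis.
Set Implicit Arguments. Unset Strict Implicit. Unset Printing Implicit Defensive.
Import Order.TTheory GRing.Theory Num.Theory.
Import numFieldNormedType.Exports.
Local Open Scope ring_scope.

(* f(r) = (-rho'(r))^(p-1) / rho(r)^(p-1), with drho playing the role of rho'
   (the derivative of rho, continuously extended to the closed interval). *)
Definition fquot (R : realType) (p : R) (rho drho : R -> R) (r : R) : R :=
  ((- drho r) `^ (p - 1)) / ((rho r) `^ (p - 1)).

From mathcomp Require Import all_boot all_order all_algebra.
From mathcomp Require Import all_classical all_reals all_analysis.
From mathcomp Require Import ring lra.
Import Order.TTheory GRing.Theory Num.Theory.
Import numFieldNormedType.Exports.
Local Open Scope classical_set_scope.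
Local Open Scope ring_scope.

(* Write w = -rho'.  Since rho decreases, w >= 0, and by the equation the
   flux w^(p-1) satisfies (w^(p-1))' = ell rho^(p-1) - (n-1)/r w^(p-1)
   <= ell rho(0)^(p-1).  As w(0) = 0, integrating from 0 gives
   w(r)^(p-1) <= ell rho(0)^(p-1) r, and dividing by
   rho(r)^(p-1) >= rho(R)^(p-1) > 0 yields f(r) <= C r for r < R; at r = R
   the Robin condition gives f(R) = beta. *)

Lemma nonincreasing_derive1_le0 (R : realType) (f : R -> R) (a b x : R) :
  {in `[a, b] &, {homo f : u v /~ u <= v}} -> x \in `]a, b[ ->
  derivable f x 1 -> derive1 f x <= 0.
Proof.
move=> decrf; rewrite in_itv /= => /andP[ax xb] df.
rewrite derive1E; apply: limr_le; first exact: df.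
have d0 : 0 < Num.min (x - a) (b - x) by rewrite lt_min !subr_gt0 ax xb.
near=> h.
have /andP[ha hb] : (`|h| < x - a) && (`|h| < b - x).
  by rewrite -lt_min; near: h; exact: dnbhs0_lt.
have [ha' hb'] : - h < x - a /\ h < b - x.
  by split; [apply: le_lt_trans ha; rewrite -normrN | apply: le_lt_trans hb];
     exact: ler_norm.
have hx u : a <= u <= b -> u \in `[a, b] by rewrite in_itv.
rewrite scaler1 /GRing.scale /=.
have [hn|hp] : h < 0 \/ 0 < h.
  by apply/orP; rewrite -neq_lt; near: h; exact: nbhs_dnbhs_neq.
- rewrite nmulr_rle0 ?invr_lt0// subr_ge0; apply: decrf; rewrite ?hx //; lra.
- rewrite pmulr_rle0 ?invr_gt0// subr_le0; apply: decrf; rewrite ?hx //; lra.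
Unshelve. all: end_near. Qed.

Lemma cvg_powR0 (R : realType) (T : Type) (F : set_system T) {FF : Filter F}
    (g : T -> R) (q : R) :
  0 < q -> (\forall t \near F, 0 <= g t) -> g t @[t --> F] --> 0 ->
  g t `^ q @[t --> F] --> 0.
Proof.
move=> q0 g0 /cvgrPdist_lt gcvg; apply/cvgrPdist_lt => e e0.
have eq0 : 0 < e `^ q^-1 by exact: powR_gt0.
near=> t.
have gt0 : 0 <= g t by near: t.
have : `|0 - g t| < e `^ q^-1 by near: t; exact: gcvg.
rewrite !sub0r !normrN !ger0_norm ?powR_ge0 // => gte.
have -> : e = (e `^ q^-1) `^ q.
  by rewrite -powRrM mulVf ?gt_eqF ?powRr1 ?(ltW e0).
by apply: gt0_ltr_powR; rewrite ?nnegrE ?(ltW eq0).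
Unshelve. all: end_near. Qed.

Lemma le_at_right_lim_derive1_ub (R : realType) (f : R -> R) (a b A l r : R) :
  {in `]a, b[, forall x, derivable f x 1} ->
  {in `]a, b[, forall x, derive1 f x <= A} ->
  f x @[x --> a^'+] --> l -> r \in `]a, b[ -> f r <= l + A * (r - a).
Proof.
move=> df dfA fl; rewrite in_itv /= => /andP[ar rb].
pose g x := f x - A * x.
have ar_ab : {subset `]a, r] <= `]a, b[}.
  by move=> x; rewrite !in_itv /= => /andP[-> xr]; apply: le_lt_trans rb.
have dg x : x \in `]a, b[ -> is_derive x 1 g (derive1 f x - A).
  move=> xab; rewrite derive1E; apply: is_deriveB; first exact/derivableP/df.
  by rewrite -[A in is_derive _ _ _ A]mulr1; exact: is_deriveZ.
have g_nincr : {in `]a, r] &, {homo g : x y /~ x <= y}}.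
  apply: ler0_derive1_le_oc.
  - by move=> x /subset_itv_oo_oc/ar_ab/dg gx; exact: ex_derive.
  - move=> x /subset_itv_oo_oc/ar_ab xab; have gx := dg x xab.
    by rewrite derive1E derive_val subr_le0; exact: dfA.
  - by apply: derivable_within_continuous => x /ar_ab/dg gx; exact: ex_derive.
have gl : g x @[x --> a^'+] --> l - A * a.
  apply: cvgB => //; apply: cvgM; first exact: cvg_cst.
  exact: cvg_at_right_filter.
have : g r <= l - A * a.
  apply: (closed_cvg _ (@closed_ge _ (g r)) _ _ gl).
  near=> x; apply: g_nincr; rewrite ?in_itv /= ?ar ?lexx //.
  - apply/andP; split; first by near: x; exact: nbhs_right_gt.
    by apply: ltW; near: x; exact: nbhs_right_lt.
  - by apply: ltW; near: x; exact: nbhs_right_lt.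
rewrite /g; lra.
Unshelve. all: end_near. Qed.

Section RadialEigenfunction.
Context {R : realType} {n : nat} {p Rad beta ell : R} {rho drho : R -> R}.
Hypothesis p_gt1 : 1 < p.
Hypothesis Rad_gt0 : 0 < Rad.
Hypothesis ell_gt0 : 0 < ell.
Hypothesis rho_derivable : forall r, 0 < r < Rad -> derivable rho r 1.
Hypothesis drho_derivable :
  forall r, 0 < r < Rad -> derivable (derive1 rho) r 1.
Hypothesis drho_cont : {within `[0, Rad], continuous drho}.
Hypothesis drhoE : forall r, 0 < r < Rad -> derive1 rho r = drho r.
Hypothesis rho_gt0 : forall r, 0 <= r <= Rad -> 0 < rho r.
Hypothesis rho_nincr :
  forall x y, 0 <= x -> x <= y -> y <= Rad -> rho y <= rho x.
Hypothesis ode : forall r, 0 < r < Rad ->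
  - (p - 1) * (- drho r) `^ (p - 2) * derive1 (derive1 rho) r
  + (n.-1)%:R / r * (- drho r) `^ (p - 1) = ell * (rho r) `^ (p - 1).
Hypothesis drho0 : drho 0 = 0.
Hypothesis robin :
  - (- drho Rad) `^ (p - 1) + beta * (rho Rad) `^ (p - 1) = 0.

Let p1_neq0 : p - 1 != 0. Proof. by rewrite subr_eq0 gt_eqF. Qed.

Lemma powR_rho_nincr [x y : R] : 0 <= x -> x <= y -> y <= Rad ->
  rho y `^ (p - 1) <= rho x `^ (p - 1).
Proof.
move=> x0 xy yR; have y0 := le_trans x0 xy; have xR := le_trans xy yR.
apply: ge0_ler_powR; rewrite ?nnegrE.
- by rewrite subr_ge0 ltW.
- by rewrite ltW // rho_gt0 // y0 yR.
- by rewrite ltW // rho_gt0 // x0 xR.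
- exact: rho_nincr.
Qed.

Lemma derive1_rho_le0 r : 0 < r < Rad -> derive1 rho r <= 0.
Proof.
move=> r0R; apply: (@nonincreasing_derive1_le0 _ _ 0 Rad).
- move=> x y; rewrite !in_itv /= => /andP[_ xR] /andP[y0 _] yx.
  exact: rho_nincr.
- by rewrite in_itv.
- exact: rho_derivable.
Qed.

(* An interior zero of [rho'] is a maximum of [rho'], so [rho''] vanishes
   there as well: the left-hand side of the ODE would vanish while its
   right-hand side is positive. *)
Lemma derive1_rho_lt0 r : 0 < r < Rad -> derive1 rho r < 0.
Proof.
move=> r0R; rewrite lt_neqAle derive1_rho_le0 // andbT.
apply/negP => /eqP rho'0.
have /andP[r0 rR] := r0R.
have rho''0 : is_derive r 1 (derive1 rho) 0.
  apply: (@derive1_at_max _ _ 0 Rad); first exact: ltW (lt_trans r0 rR).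
  - by move=> t /[!in_itv] /drho_derivable.
  - by rewrite in_itv.
  - by move=> t /[!in_itv] /derive1_rho_le0; rewrite rho'0.
have := ode r r0R.
rewrite derive1E derive_val -drhoE // rho'0 oppr0 (powR0 p1_neq0).
rewrite !(mulr0, addr0) => /eqP; rewrite eq_sym gt_eqF // mulr_gt0 //.
by apply/powR_gt0/rho_gt0; rewrite !ltW.
Qed.

Lemma derive1_flux_le r : 0 < r < Rad ->
  derive1 (fun t => (- derive1 rho t) `^ (p - 1)) r <= ell * rho 0 `^ (p - 1).
Proof.
move=> r0R; have /andP[r0 rR] := r0R.
have w_gt0 : 0 < - derive1 rho r by rewrite oppr_gt0 derive1_rho_lt0.
have dw : derivable (- derive1 rho) r 1 := derivableN (drho_derivable _ r0R).
have dpow : derivable (@powR R ^~ (p - 1)) (- derive1 rho r) 1.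
  by apply: derivable_powR; rewrite in_itv /= andbT.
change (fun t => _) with ((@powR R ^~ (p - 1)) \o (- derive1 rho)).
rewrite derive1_comp // powR_derive1 ?in_itv /= ?andbT //.
rewrite derive1N; last exact: drho_derivable.
have -> : p - 1 - 1 = p - 2 by ring.
rewrite opprfctE mulrN -!mulNr.
have := ode r r0R; rewrite -drhoE // => /(canRL (addrK _)) ->.
have flux_ge0 : 0 <= (n.-1)%:R / r * (- derive1 rho r) `^ (p - 1).
  by rewrite mulr_ge0 ?divr_ge0 ?powR_ge0 // ltW.
have := ler_wpM2l (ltW ell_gt0) (powR_rho_nincr (lexx 0) (ltW r0) (ltW rR)).
lra.
Qed.

Lemma derivable_flux r : 0 < r < Rad ->
  derivable (fun t => (- derive1 rho t) `^ (p - 1)) r 1.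
Proof.
move=> r0R; apply/derivable1_diffP.
change (fun t => _) with ((@powR R ^~ (p - 1)) \o (- derive1 rho)).
apply: differentiable_comp; apply/derivable1_diffP.
- exact/derivableN/drho_derivable.
- by apply: derivable_powR; rewrite in_itv /= andbT oppr_gt0 derive1_rho_lt0.
Qed.

Lemma flux_cvg0 : (- derive1 rho t) `^ (p - 1) @[t --> 0^'+] --> 0.
Proof.
have near0 : \forall t \near 0^'+, 0 < t < Rad.
  near=> t; apply/andP; split; near: t; first exact: nbhs_right_gt.
  exact: nbhs_right_lt.
apply: cvg_powR0; first by rewrite subr_gt0.
  by near=> t; rewrite oppr_ge0 derive1_rho_le0 //; near: t.
have [_ drho_right _] := (continuous_within_itvP _ Rad_gt0).1 drho_cont.
have : - drho t @[t --> 0^'+] --> - drho 0 by apply: cvgN.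
rewrite drho0 oppr0; apply: cvg_trans.
by apply: near_eq_cvg; near=> t; rewrite drhoE //; near: t.
Unshelve. all: end_near. Qed.

Lemma flux_le r : 0 < r < Rad ->
  (- drho r) `^ (p - 1) <= ell * rho 0 `^ (p - 1) * r.
Proof.
move=> r0R; rewrite -drhoE //.
have := @le_at_right_lim_derive1_ub _ _ 0 Rad (ell * rho 0 `^ (p - 1)) 0 r
  _ _ flux_cvg0.
rewrite add0r subr0; apply; rewrite ?in_itv //.
- by move=> t /[!in_itv] /derivable_flux.
- by move=> t /[!in_itv] /derive1_flux_le.
Qed.

Lemma fquot_Rad : fquot p rho drho Rad = beta.
Proof.
have rhoR_gt0 : 0 < rho Rad `^ (p - 1).
  by apply/powR_gt0/rho_gt0; rewrite lexx ltW.
rewrite /fquot; have -> : (- drho Rad) `^ (p - 1) = beta * rho Rad `^ (p - 1).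
  by apply/esym/eqP; rewrite -subr_eq0 addrC robin.
by rewrite mulfK ?gt_eqF.
Qed.

Lemma fquot0 : fquot p rho drho 0 = 0.
Proof. by rewrite /fquot drho0 oppr0 powR0 // mul0r. Qed.

Lemma fquot_le r : 0 < r < Rad ->
  fquot p rho drho r <= ell * rho 0 `^ (p - 1) / rho Rad `^ (p - 1) * r.
Proof.
move=> r0R; have /andP[r0 rR] := r0R.
have rhoR_gt0 : 0 < rho Rad `^ (p - 1).
  by apply/powR_gt0/rho_gt0; rewrite lexx ltW.
have rhoR_le := powR_rho_nincr (ltW r0) (ltW rR) (lexx Rad).
rewrite /fquot ler_pdivrMr ?(lt_le_trans rhoR_gt0 rhoR_le) //.
apply: le_trans (flux_le r r0R) _.
set A := ell * _; set Y := rho r `^ _; set YR := rho Rad `^ _.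
have -> : A / YR * r * Y = A * r * (Y / YR) by ring.
apply: ler_peMr; last by rewrite ler_pdivlMr // mul1r.
by rewrite !mulr_ge0 ?powR_ge0 // ltW.
Qed.
End RadialEigenfunction.

Theorem theorem4p6 (R : realType) (n : nat) (p Rad beta ell : R)
  (rho drho : R -> R) :
  (2 <= n)%N -> 1 < p -> 0 < Rad -> 0 < beta ->
  (* ell stands for the first eigenvalue ell_1(beta, W_Rad) (> 0) *)
  0 < ell ->
  (* rho in C^infty(]0,Rad[) *)
  (forall (k : nat) (r : R), 0 < r < Rad ->
      derivable (iter k (@derive1 R R) rho) r 1) ->
  (* rho in C^1([0,Rad]) with derivative drho *)
  {within `[0, Rad], continuous rho} ->
  {within `[0, Rad], continuous drho} ->
  (forall r : R, 0 < r < Rad -> derive1 rho r = drho r) ->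
  (* rho positive and decreasing on [0,Rad] *)
  (forall r : R, 0 <= r <= Rad -> 0 < rho r) ->
  (forall x y : R, 0 <= x -> x <= y -> y <= Rad -> rho y <= rho x) ->
  (* the ODE on ]0,Rad[ *)
  (forall r : R, 0 < r < Rad ->
      - (p - 1) * (- drho r) `^ (p - 2) * derive1 (derive1 rho) r
      + (n.-1)%:R / r * (- drho r) `^ (p - 1)
      = ell * (rho r) `^ (p - 1)) ->
  (* boundary conditions *)
  drho 0 = 0 ->
  - (- drho Rad) `^ (p - 1) + beta * (rho Rad) `^ (p - 1) = 0 ->
  exists C : R, 0 < C /\
    forall r : R, 0 <= r <= Rad -> fquot p rho drho r <= C * r.
Proof.
move=> _ p_gt1 Rad_gt0 beta_gt0 ell_gt0 rho_smooth _ drho_cont drhoE rho_gt0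
  rho_nincr ode drho0 robin.
have rho_der r : 0 < r < Rad -> derivable rho r 1 := rho_smooth 0%N r.
have drho_der r : 0 < r < Rad -> derivable (derive1 rho) r 1 :=
  rho_smooth 1%N r.
set A := ell * rho 0 `^ (p - 1) / rho Rad `^ (p - 1).
have A_ge0 : 0 <= A by rewrite !(mulr_ge0, invr_ge0, powR_ge0) ?ltW.
exists (A + beta / Rad); split; first by rewrite ltr_wpDl ?divr_gt0.
move=> r /andP[r0 rR].
have [->|r_neq0] := eqVneq r 0; first by rewrite (fquot0 p_gt1 drho0) mulr0.
have [->|r_neqR] := eqVneq r Rad.
  rewrite (fquot_Rad Rad_gt0 rho_gt0 robin) mulrDl divfK ?gt_eqF //.
  by rewrite lerDr mulr_ge0 // ltW.
have r_itv : 0 < r < Rad by rewrite !lt_neqAle eq_sym r_neq0 r_neqR r0 rR.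
apply: le_trans (fquot_le p_gt1 Rad_gt0 ell_gt0 rho_der drho_der drho_cont
  drhoE rho_gt0 rho_nincr ode drho0 r r_itv) _.
by rewrite ler_wpM2r // lerDl divr_ge0 // ltW.
Qed.
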